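(* There exists a combinatorial auction (with truthful bids) that admits a Walrasian equilibrium on the original items, but in which for every Walrasian equilibrium $(x^*,p)$ on the original items some winning bidder $i$ pays strictly more than her winning level, i.e. $p\,a^{i*}>w(\mathcal I\setminus i,c,\mathcal K)-w(\mathcal I\setminus i,c-a^{i*},\mathcal K)$. In this sense, minimal Walrasian equilibrium prices may be strictly greater than winning-level payments.
   Context: Combinatorial auction: item types $j\in\mathcal J$ with supply $c_j\in\mathbb Z_{\ge1}$ (vector $c$); bidders $\mathcal I$; finite set of bids $\mathcal K$, bid $k$ made by bidder $i(k)$ with bundle $a^k\in\mathbb Z^J_{\ge0}$, $a^k\le c$, amount $b_k\ge0$; $\mathcal K_i$ = bids of bidder $i$. Feasible allocation: $x\in\{0,1\}^K$ with $\sum_k a^kx_k\le c$ and at most one accepted bid per bidder. $w(\mathcal C,c',\mathcal K)$ = maximum total bid amount over feasible allocations with supply $c'$ using only bids of bidders in $\mathcal C$. $x^*$ efficient allocation; $a^{i*},b_{i*}$ bundle and amount of $i$'s accepted bid ($\bm 0,0$ if none). A Walrasian equilibrium (on the original items, i.e. with no artificial items) is $(x^*,p)$ with $p\in\mathbb R^J_{\ge0}$, $s_i=b_{i*}-p\,a^{i*}\ge0$ for all $i$, $p\,a^k+s_{i(k)}\ge b_k$ for all bids $k$, and $p_j=0$ for every item in excess supply under $x^*$. *)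

From HB Require Import structures.
From mathcomp Require Import all_boot all_order all_algebra.
From mathcomp Require Import reals.
Unset Printing Implicit Defensive.
Import Order.TTheory GRing.Theory Num.Theory.
Local Open Scope ring_scope.

Record auction (R : realType) := Auction {
  nJ : nat;
  nI : nat;
  nK : nat;
  supply : 'I_nJ -> nat;
  bidder : 'I_nK -> 'I_nI;
  bundle : 'I_nK -> 'I_nJ -> nat;
  amount : 'I_nK -> R
}.

Arguments nJ {R}. Arguments nI {R}. Arguments nK {R}.
Arguments supply {R}. Arguments bidder {R}. Arguments bundle {R}. Arguments amount {R}.

Section Auction.
Variable (R : realType) (A : auction R).

Definition valid_auction : Prop :=
  [/\ forall j, (1 <= supply A j)%N,
      forall k j, (bundle A k j <= supply A j)%N
    & forall k, 0 <= amount A k].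

Definition feasible (C : {set 'I_(nI A)}) (cs : 'I_(nJ A) -> nat)
  (S : {set 'I_(nK A)}) : bool :=
  [&& [forall k in S, bidder A k \in C],
      [forall j, (\sum_(k in S) bundle A k j <= cs j)%N]
    & [forall i, (#|[set k in S | bidder A k == i]| <= 1)%N]].

Definition value (S : {set 'I_(nK A)}) : R := \sum_(k in S) amount A k.

Definition w (C : {set 'I_(nI A)}) (cs : 'I_(nJ A) -> nat) : R :=
  \big[Num.max/0]_(S : {set 'I_(nK A)} | feasible C cs S) value S.

Definition efficient (S : {set 'I_(nK A)}) : Prop :=
  feasible setT (supply A) S /\ value S = w setT (supply A).

(* bundle a^{i*} and amount b_{i*} of bidder i's accepted bid (0 if none) *)
Definition won_bundle (S : {set 'I_(nK A)}) (i : 'I_(nI A)) (j : 'I_(nJ A)) : nat :=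
  (\sum_(k in S | bidder A k == i) bundle A k j)%N.
Definition won_amount (S : {set 'I_(nK A)}) (i : 'I_(nI A)) : R :=
  \sum_(k in S | bidder A k == i) amount A k.

Definition price_of (p : 'I_(nJ A) -> R) (a : 'I_(nJ A) -> nat) : R :=
  \sum_j p j * (a j)%:R.

Definition surplus (S : {set 'I_(nK A)}) (p : 'I_(nJ A) -> R) (i : 'I_(nI A)) : R :=
  won_amount S i - price_of p (won_bundle S i).

Definition walrasian (S : {set 'I_(nK A)}) (p : 'I_(nJ A) -> R) : Prop :=
  [/\ efficient S,
      forall j, 0 <= p j,
      forall i, 0 <= surplus S p i,
      forall k, amount A k <= price_of p (bundle A k) + surplus S p (bidder A k)
    & forall j, (\sum_(k in S) bundle A k j < supply A j)%N -> p j = 0].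

Definition winning (S : {set 'I_(nK A)}) (i : 'I_(nI A)) : bool :=
  [exists k in S, bidder A k == i].

Definition winning_level (S : {set 'I_(nK A)}) (i : 'I_(nI A)) : R :=
  w [set~ i] (supply A) - w [set~ i] (fun j => supply A j - won_bundle S i j)%N.

End Auction.
Arguments valid_auction {R}. Arguments feasible {R} A. Arguments value {R} A.
Arguments w {R} A. Arguments efficient {R} A. Arguments won_bundle {R} A.
Arguments won_amount {R} A. Arguments price_of {R} A. Arguments surplus {R} A.
Arguments walrasian {R} A. Arguments winning {R} A. Arguments winning_level {R} A.

From HB Require Import structures.
From mathcomp Require Import all_boot all_order all_algebra.
From mathcomp Require Import reals.
From mathcomp Require Import lra.
Import Order.TTheory GRing.Theory Num.Theory.
Local Open Scope ring_scope.

(* Two units of one item: bidders 0 and 1 each bid 2 for one unit, bidder 2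
   bids 3 for both units.  The only efficient allocation serves bidders 0
   and 1, and bidder 2 must be priced out, which forces a unit price of at
   least 3/2.  Without bidder 0, however, the second unit adds only
   3 - 2 = 1 to the welfare, so bidder 0's winning level is 1 < 3/2. *)

Section WalrasianTheory.
Variables (R : realType) (A : auction R).
Implicit Types (C : {set 'I_(nI A)}) (cs : 'I_(nJ A) -> nat).
Implicit Types (S : {set 'I_(nK A)}) (p : 'I_(nJ A) -> R).

Lemma feasible_set0 C cs : feasible A C cs set0.
Proof.
apply/and3P; split; apply/forallP.
- by move=> k; rewrite in_set0.
- by move=> j; rewrite big_set0.
- by move=> i; rewrite eq_card0 // => k; rewrite !inE.
Qed.

Lemma w_eq_value C cs S :
  feasible A C cs S ->
  (forall T, feasible A C cs T -> value A T <= value A S) ->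
  w A C cs = value A S.
Proof.
move=> feasS maxS; apply/le_anti/andP; split; last exact: le_bigmax_cond.
apply: bigmax_le => //.
by have := maxS _ (feasible_set0 C cs); rewrite /value big_set0.
Qed.

Lemma surplus_not_winning S p i : ~~ winning A S i -> surplus A S p i = 0.
Proof.
move=> /existsPn noS.
have nobid k : (k \in S) && (bidder A k == i) = false by apply/negbTE/noS.
rewrite /surplus /won_amount /price_of /won_bundle big_pred0 // big1 ?subr0 //.
by move=> j _; rewrite big_pred0 // mulr0.
Qed.

Lemma walrasian_losing_bid S p k : walrasian A S p ->
  ~~ winning A S (bidder A k) -> amount A k <= price_of A p (bundle A k).
Proof.
case=> _ _ _ bidP _ /(surplus_not_winning _ p) surplus0.
by have := bidP k; rewrite surplus0 addr0.
Qed.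

End WalrasianTheory.

Section TwoUnitsExample.
Variable R : realType.

Definition two_units_auction : auction R :=
  @Auction R 1 3 3 (fun=> 2%N) id
    (fun k _ => if k == ord_max then 2%N else 1%N)
    (fun k => if k == ord_max then 3 else 2).

Local Notation A := two_units_auction.
Implicit Types (C S : {set 'I_3}) (cs : 'I_1 -> nat) (p : 'I_1 -> R).

Definition k0 : 'I_3 := ord0.
Definition k1 : 'I_3 := lift ord0 ord0.
Definition k2 : 'I_3 := lift ord0 (lift ord0 ord0).

Lemma ord3P (k : 'I_3) : [\/ k = k0, k = k1 | k = k2].
Proof.
case: k => -[|[|[|//]]] lt_k3; [constructor 1 | constructor 2 | constructor 3];
  exact: val_inj.
Qed.

Lemma two_units_unitsE S :
  (\sum_(k in S) bundle A k ord0 = (k0 \in S) + (k1 \in S) + (k2 \in S).*2)%N.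
Proof.
rewrite big_mkcond !big_ord_recl big_ord0 /=.
by case: (k0 \in S); case: (k1 \in S); case: (k2 \in S).
Qed.

Lemma two_units_valueE S :
  value A S = (k0 \in S)%:R * 2 + (k1 \in S)%:R * 2 + (k2 \in S)%:R * 3.
Proof.
rewrite /value big_mkcond !big_ord_recl big_ord0 /=.
by case: (k0 \in S); case: (k1 \in S); case: (k2 \in S) => /=; lra.
Qed.

Lemma two_units_feasibleE C cs S : feasible A C cs S =
  (S \subset C) && ((k0 \in S) + (k1 \in S) + (k2 \in S).*2 <= cs ord0)%N.
Proof.
rewrite /feasible -two_units_unitsE /=.
have -> : [forall i, #|[set k in S | k == i]| <= 1]%N.
  apply/forallP => i; apply: leq_trans (eq_leq (cards1 i)).
  apply: subset_leq_card; apply/subsetP => k.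
  by rewrite !inE => /andP[_ ->].
have -> : [forall k in S, k \in C] = (S \subset C) by apply/forall_inP/subsetP.
congr (_ && _); rewrite andbT.
by apply/forallP/idP => [/(_ ord0) | le_units j]; rewrite ?(ord1 j).
Qed.

Lemma two_units_winningE S i : winning A S i = (i \in S).
Proof. by apply/exists_inP/idP => [[k kS /eqP <-] | iS] //; exists i. Qed.

Lemma two_units_won_amount S i :
  won_amount A S i = if i \in S then amount A i else 0.
Proof. by rewrite /won_amount big_mkcondl big_pred1_eq. Qed.

Lemma two_units_won_bundle S i j :
  won_bundle A S i j = if i \in S then bundle A i j else 0%N.
Proof. by rewrite /won_bundle big_mkcondl big_pred1_eq. Qed.

Lemma two_units_price_of p (a : 'I_1 -> nat) :
  price_of A p a = p ord0 * (a ord0)%:R.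
Proof. by rewrite /price_of big_ord1. Qed.

Lemma two_units_w_all : w A setT (supply A) = 4.
Proof.
rewrite (@w_eq_value _ A _ _ [set k0; k1]).
- by rewrite two_units_valueE !inE /=; lra.
- by rewrite two_units_feasibleE subsetT !inE.
move=> T; rewrite two_units_feasibleE !two_units_valueE !inE /= => /andP[_].
by case: (k0 \in T); case: (k1 \in T); case: (k2 \in T) => //= _; lra.
Qed.

Lemma two_units_efficient S : efficient A S <-> S = [set k0; k1].
Proof.
split=> [[] | ->]; last first.
  rewrite /efficient two_units_w_all two_units_feasibleE subsetT.
  by rewrite two_units_valueE !inE /=; split=> //; lra.
rewrite two_units_feasibleE two_units_w_all two_units_valueE.
move=> /andP[_ units_S] value_S.
have /and3P[S0 S1 S2] : [&& k0 \in S, k1 \in S & k2 \notin S].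
  move: units_S value_S.
  by case: (k0 \in S); case: (k1 \in S); case: (k2 \in S) => //= _ ?;
    exfalso; lra.
apply/setP => k; case: (ord3P k) => ->; rewrite !inE /= ?S0 ?S1 //.
exact: negbTE.
Qed.

Lemma two_units_w_without_k0 cs : (1 <= cs ord0 <= 2)%N ->
  w A [set~ k0] cs = (cs ord0).+1%:R.
Proof.
move=> cs_range.
have feasibleE T : feasible A [set~ k0] cs T =
    (k0 \notin T) && ((k1 \in T) + (k2 \in T).*2 <= cs ord0)%N.
  by rewrite two_units_feasibleE subsetC sub1set !inE; case: (k0 \in T).
have cs_cases : cs ord0 = 1%N \/ cs ord0 = 2%N.
  by move: cs_range; case: (cs ord0) => [|[|[|n]]] //; auto.
pose best := [set if cs ord0 == 1%N then k1 else k2].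
case: cs_cases => cs_eq; (rewrite (@w_eq_value _ A _ _ best) => [||T];
  rewrite ?feasibleE ?two_units_valueE /best cs_eq ?inE /=; [lra | by [] |]).
all: by case: (k0 \in T); case: (k1 \in T); case: (k2 \in T) => //= _; lra.
Qed.

Lemma two_units_valid : valid_auction A.
Proof. by split=> [j | k j | k] //=; case: (k == ord_max). Qed.

Lemma two_units_surplus S p i :
  surplus A S p i =
    if i \in S then amount A i - p ord0 * (bundle A i ord0)%:R else 0.
Proof.
rewrite /surplus two_units_won_amount two_units_price_of two_units_won_bundle.
by case: (i \in S); rewrite ?mulr0 ?subr0.
Qed.

Lemma two_units_walrasian : walrasian A [set k0; k1] (fun=> 3 / 2).
Proof.
split=> [|j|i|k|j].
- exact/two_units_efficient.
- lra.
- by rewrite two_units_surplus; case: (ord3P i) => ->; rewrite !inE /=; lra.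
- rewrite two_units_price_of two_units_surplus.
  by case: (ord3P k) => ->; rewrite !inE /=; lra.
- by rewrite (ord1 j) two_units_unitsE !inE.
Qed.

Lemma two_units_walrasian_price_ge S p : walrasian A S p -> 3 / 2 <= p ord0.
Proof.
move=> eq_Sp; have /two_units_efficient S_eq : efficient A S by case: eq_Sp.
have := @walrasian_losing_bid _ A _ _ k2 eq_Sp.
by rewrite two_units_winningE S_eq two_units_price_of !inE /= => /(_ isT); lra.
Qed.

Lemma two_units_winning_level : winning_level A [set k0; k1] k0 = 1.
Proof.
rewrite /winning_level !two_units_w_without_k0 ?two_units_won_bundle ?inE //=.
by rewrite subn1 /=; lra.
Qed.

End TwoUnitsExample.

Theorem proposition1 (R : realType) :
  exists A : auction R,
    [/\ valid_auction A,
        exists S p, walrasian A S p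
      & forall S p, walrasian A S p ->
          exists i, winning A S i /\
            winning_level A S i < price_of A p (won_bundle A S i)].
Proof.
exists (two_units_auction R); split.
- exact: two_units_valid.
- by exists [set k0; k1], (fun=> 3 / 2); apply: two_units_walrasian.
move=> S p eq_Sp; have := @two_units_walrasian_price_ge R S p eq_Sp.
have /two_units_efficient -> : efficient (two_units_auction R) S by case: eq_Sp.
exists k0; rewrite two_units_winningE two_units_winning_level.
by rewrite two_units_price_of two_units_won_bundle !inE /=; split=> //; lra.
Qed.
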